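(* Let $X$ be as in the standing setting with skeleton $X_1,\dots,X_k$, where the elements of $X_i$ are scaled (by positive factors) so that $\sum_{e\in X_i}e=0$. Suppose some $x\in X$ lies in no $\operatorname{span}X_l$ and $x\in\operatorname{pos}\{x_i,x_j\}$ with $x_i\in X_i$, $x_j\in X_j$, $i\ne j$. Then every $y\in X\cap\operatorname{span}X_i$ is a positive multiple of $\sum_{e\in S_y}e$. Moreover, for any $p,q\in X\cap\operatorname{span}X_i$, the supports $S_p,S_q$ are either disjoint or one is a subset of the other.
   Context: Standing setting: $X\subset\mathbb R^n\setminus\{0\}$ is a finite set such that $0$ lies in the interior of $\operatorname{conv}X$, no element of $X$ is a positive multiple of another, and every $n+1$ points of $X$ are in good position; elements of $X$ represent directions, so each may be replaced by a positive multiple without affecting these hypotheses. A finite set $A$ is in conical position if $0\notin\operatorname{conv}A$ and no point of $A$ lies in the positive hull (set of nonnegative linear combinations, denoted $\operatorname{pos}$) of the other points; it is in good position otherwise. A skeleton of $X$ is a collection of pairwise disjoint subsets $X_1,\dots,X_k\subseteq X$ such that each $X_i$ is the vertex set of a simplex whose relative interior contains $0$ and $\mathbb R^n=\operatorname{span}X_1\oplus\cdots\oplus\operatorname{span}X_k$. For a nonzero $y\in\operatorname{span}X_i$, its support $S_y$ is the minimal subset of $X_i$ whose positive hull contains $y$. *)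

From HB Require Import structures.
From mathcomp Require Import all_boot all_order all_algebra.
From mathcomp Require Import finmap.
From mathcomp Require Import all_classical all_reals all_analysis.

Set Implicit Arguments.
Unset Strict Implicit.
Unset Printing Implicit Defensive.

Import Order.TTheory GRing.Theory Num.Theory.
Import numFieldTopology.Exports numFieldNormedType.Exports.
Local Open Scope ring_scope.
Local Open Scope fset_scope.

Section Defs.
Variables (R : realType) (n : nat).
Local Notation V := 'rV[R]_n.

Definition conv (A : {fset V}) : set V :=
  fun v => exists w : V -> R,
    (forall a, a \in A -> 0 <= w a) /\ \sum_(a <- A) w a = 1 /\
    v = \sum_(a <- A) w a *: a.

Definition pos (A : {fset V}) : set V :=
  fun v => exists w : V -> R,
    (forall a, a \in A -> 0 <= w a) /\ v = \sum_(a <- A) w a *: a.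

Definition conical_position (A : {fset V}) : Prop :=
  ~ conv A 0 /\ (forall a, a \in A -> ~ pos (A `\ a) a).

Definition good_position (A : {fset V}) : Prop := ~ conical_position A.

Definition standing_setting (X : {fset V}) : Prop :=
  [/\ (0 : V) \notin X,
      interior (conv X) 0,
      (forall x y, x \in X -> y \in X -> x != y -> forall c : R, 0 < c -> x != c *: y)
    & (forall A : {fset V}, A `<=` X -> #|` A| = n.+1 -> good_position A)].

(* A is the vertex set of a simplex (affinely independent) whose relative
   interior (= points with all barycentric coordinates > 0) contains 0 *)
Definition affinely_independent (A : {fset V}) : Prop :=
  forall w : V -> R, \sum_(a <- A) w a = 0 -> \sum_(a <- A) w a *: a = 0 ->
    forall a, a \in A -> w a = 0.

Definition simplex_with_zero_in_relint (A : {fset V}) : Prop :=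
  affinely_independent A /\
  exists w : V -> R, (forall a, a \in A -> 0 < w a) /\
    \sum_(a <- A) w a = 1 /\ \sum_(a <- A) w a *: a = 0.

Definition skeleton (X : {fset V}) (k : nat) (Xs : 'I_k -> {fset V}) : Prop :=
  [/\ (forall i, Xs i `<=` X),
      (forall i j, i != j -> [disjoint Xs i & Xs j]),
      (forall i, simplex_with_zero_in_relint (Xs i)),
      (\sum_(i < k) <<Xs i>>)%VS = fullv
    & directv (\sum_(i < k) <<Xs i>>)%VS].

Definition is_support (Xi : {fset V}) (y : V) (S : {fset V}) : Prop :=
  [/\ S `<=` Xi, pos S y & forall T : {fset V}, T `<` S -> ~ pos T y].

End Defs.

(* Write x = a xi + b xj with a, b > 0.  If xi were a combination, with
   coefficients of both signs, of a free family B of points of X in span X_i,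
   then extending xj :: B by points of X to a basis D, the only linear relation
   among the n + 1 points x :: D would be x = b xj + a (combination of B): with
   two positive and one negative coefficient, these points would be in conical
   position, against the standing hypothesis.
   As X_i is a simplex with zero sum, y = \sum_e lam e e determines lam up to an
   additive constant.  Trading xi and a vertex r for y yields such a mixed
   expansion of xi unless lam e <= lam r for every vertex e != xi whenever
   lam r != lam xi.  A support S misses some vertex z, whose coefficient is 0,
   so its weights must all be equal; two crossing supports allow the same trade
   of three vertices for the two points. *)
From HB Require Import structures.
From mathcomp Require Import all_boot all_order all_algebra.
From mathcomp Require Import finmap.
From mathcomp Require Import all_classical all_reals all_analysis.
From mathcomp Require Import ring.
Set Implicit Arguments.
Unset Strict Implicit.
Unset Printing Implicit Defensive.
Import Order.TTheory GRing.Theory Num.Theory.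
Import numFieldTopology.Exports numFieldNormedType.Exports.
Local Open Scope fset_scope.
Local Open Scope ring_scope.

Section FreeFamilies.
Variables (K : fieldType) (vT : vectType K).

Lemma free_coef_eq0 (X : seq vT) (mu : vT -> K) : free X ->
  \sum_(x <- X) mu x *: x = 0 -> {in X, forall x, mu x = 0}.
Proof.
move=> fX rel0 x xX.
have [k _ uk] := free_span fX (mem0v <<X>>%VS).
have k0 : {in X, (fun=> 0) =1 k}.
  by apply: uk; rewrite big1 // => y _; rewrite scale0r.
by rewrite (uk mu (esym rel0) x xX) -(k0 x xX).
Qed.

Lemma free_of_coef_eq0 (X : seq vT) : uniq X ->
  (forall mu : vT -> K, \sum_(x <- X) mu x *: x = 0 -> {in X, forall x, mu x = 0}) ->
  free X.
Proof.
move=> uX coef0; rewrite -[X]in_tupleE; apply/freeP => k hk i.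
pose mu x := oapp k 0 (insub (index x X)).
have muE (j : 'I_(size X)) : mu X`_j = k j by rewrite /mu index_uniq // valK.
have : \sum_(x <- X) mu x *: x = 0.
  by rewrite (big_nth 0) big_mkord -[RHS]hk; apply: eq_bigr => j _; rewrite muE.
by move/coef0 => /(_ X`_i (mem_nth _ (ltn_ord i))); rewrite muE.
Qed.

Lemma free_extend (s D : seq vT) : free D -> exists C : seq vT,
  [/\ {subset C <= s}, free (D ++ C), {subset s <= <<D ++ C>>%VS}
    & {in C, forall c, c \notin <<D>>%VS}].
Proof.
elim: s D => [|a s IH] D fD; first by exists [::]; split => //; rewrite cats0.
have [aD|naD] := boolP (a \in <<D>>%VS).
  have [C [Cs fDC sDC CD]] := IH D fD; exists C; split => //.
    by move=> c /Cs cs; rewrite inE cs orbT.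
  move=> v; rewrite inE => /orP[/eqP->|/sDC//].
  by apply: (subvP (sub_span _)) aD => w wD; rewrite mem_cat wD.
have fDa : free (D ++ [:: a]).
  by rewrite (perm_free (permEl (perm_catC D [:: a]))) /= free_cons naD.
have [C [Cs fDC sDC CD]] := IH _ fDa.
exists (a :: C); rewrite -cat1s catA; split => //.
- by move=> c; rewrite inE => /orP[/eqP->|/Cs cs]; rewrite inE ?eqxx // cs orbT.
- move=> v; rewrite inE => /orP[/eqP->|/sDC//].
  by apply: memv_span; rewrite !mem_cat inE eqxx orbT.
- move=> c; rewrite inE => /orP[/eqP->//|/CD]; apply: contra.
  by apply: (subvP (sub_span _)) => w wD; rewrite mem_cat wD.
Qed.

End FreeFamilies.

Lemma size_free_full (K : fieldType) (n : nat) (D : seq 'rV[K]_n) :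
  free D -> (<<D>> = fullv)%VS -> size D = n.
Proof. by move=> fD fullD; rewrite -(eqnP fD) fullD dimvf /dim /= mul1n. Qed.

Lemma perm_seq_fset_uniq (T : choiceType) (s : seq T) :
  uniq s -> perm_eq (seq_fset tt s) s.
Proof. by move=> us; rewrite -{2}(undup_id us) seq_fset_perm. Qed.

Lemma seq_argmin (T : eqType) (R : realDomainType) (s : seq T) (f : T -> R) x0 :
  x0 \in s -> exists2 m, m \in s & {in s, forall v, f m <= f v}.
Proof.
elim: s x0 => // a [|b s] IH x0 _.
  by exists a; rewrite ?inE ?eqxx // => v; rewrite inE => /eqP->.
have [m ms mmin] := IH b (mem_head _ _).
have [le|lt] := leP (f a) (f m).
  exists a; first exact: mem_head.
  by move=> v; rewrite inE => /orP[/eqP->//|/mmin]; apply: le_trans.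
exists m; first by rewrite inE ms orbT.
by move=> v; rewrite inE => /orP[/eqP->|/mmin//]; apply: ltW.
Qed.

(* The only linear relation among x :: D is x = \sum c d *: d; with two positive
   and one negative coefficient no rescaling of it has the sign pattern of a
   conical dependence. *)
Lemma conical_position_free_cons (R : realType) (n : nat) (D : seq 'rV[R]_n)
    (x : 'rV[R]_n) (c : 'rV[R]_n -> R) (d1 d2 d3 : 'rV[R]_n) :
  free D -> x \notin D -> x = \sum_(d <- D) c d *: d ->
  d1 \in D -> d2 \in D -> d1 != d2 -> 0 < c d1 -> 0 < c d2 ->
  d3 \in D -> c d3 < 0 ->
  conical_position (seq_fset tt (x :: D)).
Proof.
move=> fD xD xE d1D d2D d12 c1 c2 d3D c3.
have A_perm : perm_eq (seq_fset tt (x :: D)) (x :: D).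
  by apply: perm_seq_fset_uniq; rewrite /= xD free_uniq.
set A := seq_fset tt (x :: D).
have DA d : d \in D -> d \in A by move=> dD; rewrite seq_fsetE inE dD orbT.
have relE (mu : 'rV[R]_n -> R) : \sum_(v <- A) mu v *: v = 0 ->
    {in D, forall d, mu d = - (mu x * c d)}.
  rewrite (perm_big _ A_perm) /= big_cons [X in mu x *: X]xE scaler_sumr.
  rewrite -big_split /= => rel0.
  have rel : \sum_(d <- D) (mu d + mu x * c d) *: d = 0.
    by rewrite -[RHS]rel0; apply: eq_bigr => v _; rewrite scalerDl scalerA addrC.
  move=> d dD; apply/eqP; rewrite -addr_eq0; apply/eqP.
  exact: (free_coef_eq0 fD rel dD).
split.
  move=> [w [w_ge0 [w1 w0]]].
  have wD := relE w (esym w0).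
  have wx0 : w x = 0.
    apply/eqP; rewrite eq_le w_ge0 ?seq_fsetE ?mem_head // andbT.
    by have := w_ge0 d1 (DA d1 d1D); rewrite wD // oppr_ge0 pmulr_lle0.
  move: w1; rewrite (perm_big _ A_perm) /= big_cons wx0 add0r big1_seq.
    by move/eqP; rewrite eq_sym oner_eq0.
  by move=> d /andP[_ dD]; rewrite wD // wx0 mul0r oppr0.
move=> a aA [w [w_ge0 aE]].
pose mu v := if v == a then -1 else w v.
have mu_ge0 v : v \in A -> v != a -> 0 <= mu v.
  by move=> vA va; rewrite /mu (negPf va); apply: w_ge0; rewrite in_fsetD1 va.
have muD : {in D, forall d, mu d = - (mu x * c d)}.
  apply: relE; rewrite (big_fsetD1 a) //= /mu eqxx scaleN1r.
  rewrite (eq_big_seq (fun v => w v *: v)) -?aE ?addNr //.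
  by move=> v; rewrite in_fsetD1 => /andP[/negPf-> _].
have [ax|ax] := eqVneq a x.
  have d3a : d3 != a by rewrite ax; apply: contraNneq xD => <-.
  have := mu_ge0 d3 (DA d3 d3D) d3a.
  by rewrite muD // /mu ax eqxx /= mulN1r opprK leNgt c3.
have mux : 0 <= mu x by apply: mu_ge0; rewrite ?seq_fsetE ?mem_head // eq_sym.
have [d [dD da cd]] : exists d, [/\ d \in D, d != a & 0 < c d].
  by case: (eqVneq d1 a) => [e|]; [exists d2; split; rewrite // -e eq_sym | exists d1].
have mux0 : mu x = 0.
  apply/eqP; rewrite eq_le mux andbT -(pmulr_lle0 _ cd) -oppr_ge0 -muD //.
  exact: mu_ge0 (DA d dD) da.
have aD : a \in D by move: aA; rewrite seq_fsetE inE (negPf ax).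
have := muD a aD; rewrite mux0 mul0r oppr0 /mu eqxx => /eqP.
by rewrite oppr_eq0 oner_eq0.
Qed.

Section GoodPosition.
Variables (R : realType) (n : nat) (X : {fset 'rV[R]_n}).
Hypothesis X_good :
  forall A : {fset 'rV[R]_n}, A `<=` X -> #|` A| = n.+1 -> good_position A.
Hypothesis X_span : (<<X>> = fullv)%VS.

Lemma no_mixed_expansion (x u v : 'rV[R]_n) (a b : R) (B : seq 'rV[R]_n)
    (c : 'rV[R]_n -> R) :
  x \in X -> v \in X -> {subset B <= X} -> 0 < a -> 0 < b ->
  x = a *: u + b *: v -> free (v :: B) -> x \notin v :: B ->
  u = \sum_(w <- B) c w *: w ->
  (exists2 w, w \in B & 0 < c w) -> (exists2 w, w \in B & c w < 0) -> False.
Proof.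
move=> xX vX BX a0 b0 xE fvB xvB uE [wp wpB cwp] [wn wnB cwn].
have [C [CX fD XD Cn]] := free_extend (X : seq _) fvB.
set D := (v :: B) ++ C in fD XD.
have vB : v \notin B by case/andP: (free_uniq fvB).
pose coef d := if d \in B then a * c d else if d == v then b else 0.
have xD : x = \sum_(d <- D) coef d *: d.
  rewrite /D big_cat big_cons /= [X in _ + X]big1_seq ?addr0; last first.
    move=> d /andP[_ /Cn dn]; rewrite /coef.
    have dB : d \notin B by apply: contra dn => dB; rewrite memv_span // inE dB orbT.
    have dv : d != v by apply: contraNneq dn => ->; rewrite memv_span ?mem_head.
    by rewrite (negPf dB) (negPf dv) scale0r.
  rewrite /coef (negPf vB) eqxx xE addrC; congr (_ + _).
  by rewrite uE scaler_sumr; apply: eq_big_seq => d dB; rewrite dB scalerA.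
have x_span : x \in <<v :: B>>%VS.
  rewrite xE memvD // memvZ //; last by rewrite memv_span ?mem_head.
  rewrite uE big_seq; apply: memv_suml => w wB.
  by rewrite memvZ // memv_span // inE wB orbT.
have xnD : x \notin D.
  by rewrite mem_cat negb_or xvB /=; apply/negP => /Cn; rewrite x_span.
have uxD : uniq (x :: D) by rewrite cons_uniq xnD (free_uniq fD).
have sizeD : size D = n.
  apply: (size_free_full fD); apply/eqP.
  by rewrite eqEsubv subvf /= -X_span; apply/span_subvP.
have BD w : w \in B -> w \in D by move=> wB; rewrite mem_cat inE wB orbT.
have coefB w : w \in B -> coef w = a * c w by rewrite /coef => ->.
have AX : seq_fset tt (x :: D) `<=` X.
  apply/fsubsetP => w; rewrite seq_fsetE inE mem_cat.
  case/orP=> [/eqP->//|/orP[|/CX//]].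
  by rewrite inE => /orP[/eqP->//|/BX].
have cardA : #|` seq_fset tt (x :: D)| = n.+1.
  by rewrite size_seq_fset undup_id //; apply: (congr1 S).
apply: (X_good AX cardA).
apply: (conical_position_free_cons (d1 := v) fD xnD xD _ (BD _ wpB) _ _ _
  (BD _ wnB)).
- by rewrite mem_cat mem_head.
- by apply: contraNneq vB => ->.
- by rewrite /coef (negPf vB) eqxx.
- by rewrite coefB // mulr_gt0.
- by rewrite coefB // pmulr_rlt0.
Qed.

End GoodPosition.

Lemma mulf_cancel_eq0 (F : idomainType) (k a b : F) :
  k * a = k * b -> a != b -> k = 0.
Proof. by move=> kab; apply: contraNeq => /mulfI/(_ a b kab)->; rewrite eqxx. Qed.

Section SimplexCoordinates.
Variables (R : realType) (n : nat) (Xi : {fset 'rV[R]_n}).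
Hypothesis Xi_sum0 : \sum_(e <- Xi) e = 0.
Hypothesis Xi_aff : affinely_independent Xi.

Definition comb (f : 'rV[R]_n -> R) := \sum_(e <- Xi) f e *: e.

Lemma combD f g : comb (fun e => f e + g e) = comb f + comb g.
Proof. by rewrite /comb -big_split; apply: eq_bigr => e _; rewrite scalerDl. Qed.

Lemma combB f g : comb (fun e => f e - g e) = comb f - comb g.
Proof. by rewrite /comb -sumrB; apply: eq_bigr => e _; rewrite scalerBl. Qed.

Lemma combZ a f : comb (fun e => a * f e) = a *: comb f.
Proof. by rewrite /comb scaler_sumr; apply: eq_bigr => e _; rewrite scalerA. Qed.

Lemma comb_shift f g t : {in Xi, forall e, f e = g e + t} -> comb f = comb g.
Proof.
move=> fE; rewrite /comb (eq_big_seq (fun e => g e *: e + t *: e)).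
  by rewrite big_split /= -scaler_sumr Xi_sum0 scaler0 addr0.
by move=> e eXi; rewrite fE // scalerDl.
Qed.

Lemma comb_delta e0 : e0 \in Xi -> comb (fun e => (e == e0)%:R) = e0.
Proof.
move=> e0Xi; rewrite /comb (big_fsetD1 e0) //= eqxx scale1r big1_seq ?addr0 //.
by move=> e /andP[_]; rewrite in_fsetD1 => /andP[/negPf-> _]; rewrite scale0r.
Qed.

Lemma comb_restrict (S : {fset 'rV[R]_n}) (F : 'rV[R]_n -> R) : S `<=` Xi ->
  \sum_(e <- S) F e *: e = comb (fun e => if e \in S then F e else 0).
Proof.
move=> SXi; rewrite /comb -(big_fset_incl _ SXi); last first.
  by move=> e _ /negPf->; rewrite scale0r.
by apply: eq_big_seq => e ->.
Qed.

Lemma comb_in_span f : comb f \in <<Xi>>%VS.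
Proof.
by rewrite /comb big_seq; apply: memv_suml => e eXi; rewrite memvZ // memv_span.
Qed.

(* Subtracting the mean of the coefficients turns [comb f = 0] into an affine
   dependence. *)
Lemma comb_eq0_const f : comb f = 0 -> {in Xi &, forall e1 e2, f e1 = f e2}.
Proof.
move=> f0 e1 e2 e1Xi e2Xi.
set N := size (Xi : seq _).
have N0 : N%:R != 0 :> R.
  by rewrite pnatr_eq0 -lt0n /N cardfs_gt0; apply/fset0Pn; exists e1.
set t := (\sum_(e <- Xi) f e) / N%:R.
have ft0 : {in Xi, forall e, f e - t = 0}.
  apply: Xi_aff; first by rewrite sumrB big_const_seq count_predT iter_addr_0
    -mulr_natr /t divfK // subrr.
  under eq_bigr do rewrite scalerBl.
  by rewrite sumrB -scaler_sumr Xi_sum0 scaler0 subr0.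
by apply: (subIr t); rewrite !ft0.
Qed.

Lemma comb_eq_const f g : comb f = comb g ->
  {in Xi &, forall e1 e2, f e1 - g e1 = f e2 - g e2}.
Proof. by move=> fg; apply: comb_eq0_const; rewrite combB fg subrr. Qed.

Lemma free_exchange1 (lam : 'rV[R]_n -> R) (y s r : 'rV[R]_n) :
  s \in Xi -> r \in Xi -> lam r != lam s -> y = comb lam ->
  free (y :: (Xi `\` [fset s; r] : seq _)).
Proof.
move=> sXi rXi lrs yE.
set Rs := Xi `\` [fset s; r].
have memR v : (v \in Rs) = [&& v != s, v != r & v \in Xi].
  by rewrite in_fsetD !inE negb_or andbA.
have RXi : Rs `<=` Xi := fsubsetDl _ _.
have [sR rR] : s \notin Rs /\ r \notin Rs by rewrite !memR !eqxx andbF.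
have yR : y \notin Rs.
  apply/negP; rewrite memR => /and3P[ys yr yXi].
  have := comb_eq_const (etrans (comb_delta yXi) yE) sXi rXi.
  rewrite [s == y]eq_sym [r == y]eq_sym (negPf ys) (negPf yr) !sub0r.
  by move/oppr_inj => lsr; rewrite lsr eqxx in lrs.
apply: free_of_coef_eq0 => [|mu]; first by rewrite /= yR fset_uniq.
rewrite big_cons (comb_restrict _ RXi) [X in mu y *: X]yE -combZ -combD => /comb_eq0_const c0.
have muy : mu y = 0.
  have := c0 r s rXi sXi; rewrite /= (negPf sR) (negPf rR) !addr0.
  by move/mulf_cancel_eq0; apply.
move=> v; rewrite inE => /orP[/eqP->//|vR].
have := c0 v s (fsubsetP RXi v vR) sXi.
by rewrite /= muy !mul0r !add0r vR (negPf sR).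
Qed.

Lemma free_exchange2 (lp lq : 'rV[R]_n -> R) (p q s0 s t : 'rV[R]_n) :
  s0 \in Xi -> s \in Xi -> t \in Xi ->
  lp t = lp s0 -> lq s = lq s0 -> lp s != lp s0 -> lq t != lq s0 ->
  p = comb lp -> q = comb lq ->
  free (p :: q :: (Xi `\` [fset s0; s; t] : seq _)).
Proof.
move=> s0Xi sXi tXi lpt lqs lps lqt pE qE.
set Rs := Xi `\` [fset s0; s; t].
have memR v : (v \in Rs) = [&& v != s0, v != s, v != t & v \in Xi].
  by rewrite in_fsetD !inE !negb_or -!andbA.
have RXi : Rs `<=` Xi := fsubsetDl _ _.
have [s0R [sR tR]] : [/\ s0 \notin Rs, s \notin Rs & t \notin Rs].
  by rewrite !memR !eqxx !andbF.
have pR : p \notin Rs.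
  apply/negP; rewrite memR => /and4P[ps0 ps _ pXi].
  have := comb_eq_const (etrans (comb_delta pXi) pE) sXi s0Xi.
  rewrite [s == p]eq_sym [s0 == p]eq_sym (negPf ps0) (negPf ps) !sub0r.
  by move/oppr_inj => e; rewrite e eqxx in lps.
have qR : q \notin Rs.
  apply/negP; rewrite memR => /and4P[qs0 _ qt qXi].
  have := comb_eq_const (etrans (comb_delta qXi) qE) tXi s0Xi.
  rewrite [t == q]eq_sym [s0 == q]eq_sym (negPf qs0) (negPf qt) !sub0r.
  by move/oppr_inj => e; rewrite e eqxx in lqt.
have pq : p != q.
  apply/eqP => epq; have := comb_eq_const (etrans (esym pE) (etrans epq qE)) sXi s0Xi.
  by rewrite lqs => /addIr e; rewrite e eqxx in lps.
apply: free_of_coef_eq0 => [|mu]; first by rewrite /= inE negb_or pq pR qR fset_uniq.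
rewrite !big_cons (comb_restrict _ RXi) [X in mu p *: X]pE [X in mu q *: X]qE.
rewrite -!combZ -!combD => /comb_eq0_const c0.
have mup : mu p = 0.
  have := c0 s s0 sXi s0Xi; rewrite /= (negPf sR) (negPf s0R) !addr0 lqs.
  by move/addIr/mulf_cancel_eq0; apply.
have muq : mu q = 0.
  have := c0 t s0 tXi s0Xi; rewrite /= (negPf tR) (negPf s0R) !addr0 lpt.
  by move/addrI/mulf_cancel_eq0; apply.
move=> v; rewrite !in_cons => /orP[/eqP->//|/orP[/eqP->//|vR]].
have := c0 v s0 (fsubsetP RXi v vR) s0Xi.
by rewrite /= mup muq !mul0r !add0r vR (negPf s0R).
Qed.

Lemma sum_comb_indicator (A : {fset 'rV[R]_n}) : A `<=` Xi ->
  \sum_(e <- A) e = comb (fun e => (e \in A)%:R).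
Proof.
move=> AXi; rewrite (eq_bigr (fun e => 1 *: e)) => [|e _]; last by rewrite scale1r.
by rewrite (comb_restrict _ AXi); apply: eq_bigr => e _; case: (e \in A).
Qed.

Lemma comb_exchange1 (lam : 'rV[R]_n -> R) (y s r : 'rV[R]_n) :
  s \in Xi -> r \in Xi -> lam r != lam s -> y = comb lam ->
  s = (lam s - lam r)^-1 *: y +
      \sum_(v <- Xi `\` [fset s; r]) (- (lam v - lam r) / (lam s - lam r)) *: v.
Proof.
move=> sXi rXi lrs yE.
have d0 : lam s - lam r != 0 by rewrite subr_eq0 eq_sym.
have rs : r != s by apply: contraNneq lrs => ->.
rewrite (comb_restrict _ (fsubsetDl _ _)) yE -combZ -combD -{1}(comb_delta sXi).
apply: (comb_shift (t := - (lam r / (lam s - lam r)))) => v vXi.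
have [->|vs] := eqVneq v s; first by rewrite in_fsetD !inE eqxx /=; field.
have [->|vr] := eqVneq v r; first by rewrite in_fsetD !inE eqxx orbT /=; field.
by rewrite in_fsetD !inE (negPf vs) (negPf vr) vXi /=; field.
Qed.

Lemma comb_exchange2 (P Q : {fset 'rV[R]_n}) (al be : R) (p q s0 s t : 'rV[R]_n) :
  P `<=` Xi -> Q `<=` Xi -> s0 \in Xi -> s0 \notin P -> s0 \notin Q ->
  s \in P -> s \notin Q -> t \in Q -> t \notin P -> al != 0 -> be != 0 ->
  p = al *: \sum_(e <- P) e -> q = be *: \sum_(e <- Q) e ->
  s0 = - al^-1 *: p + (- be^-1 *: q +
    \sum_(v <- Xi `\` [fset s0; s; t]) ((v \in P)%:R + (v \in Q)%:R - 1) *: v).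
Proof.
move=> PXi QXi s0Xi s0P s0Q sP sQ tQ tP al0 be0 pE qE.
rewrite pE qE !sum_comb_indicator // (comb_restrict _ (fsubsetDl _ _)).
rewrite -!combZ -!combD -{1}(comb_delta s0Xi).
apply: (comb_shift (t := 1)) => v vXi.
have [->|vs0] := eqVneq v s0.
  by rewrite in_fsetD !inE eqxx (negPf s0P) (negPf s0Q) /=; field; rewrite ?al0 ?be0.
have [->|vs] := eqVneq v s.
  by rewrite in_fsetD !inE eqxx orbT sP (negPf sQ) /=; field; rewrite ?al0 ?be0.
have [->|vt] := eqVneq v t.
  by rewrite in_fsetD !inE eqxx !orbT (negPf tP) tQ /=; field; rewrite ?al0 ?be0.
by rewrite in_fsetD !inE (negPf vs0) (negPf vs) (negPf vt) vXi /=; field;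
  rewrite ?al0 ?be0.
Qed.

End SimplexCoordinates.

Section Block.
Variables (R : realType) (n : nat) (X Xi : {fset 'rV[R]_n}).
Hypothesis X_good :
  forall A : {fset 'rV[R]_n}, A `<=` X -> #|` A| = n.+1 -> good_position A.
Hypothesis X_span : (<<X>> = fullv)%VS.
Hypothesis X0 : 0 \notin X.
Hypotheses (Xi_sum0 : \sum_(e <- Xi) e = 0) (Xi_aff : affinely_independent Xi)
  (Xi_sub : Xi `<=` X).
Variables (x xi xj : 'rV[R]_n) (a b : R).
Hypotheses (xi_in : xi \in Xi) (xjX : xj \in X) (xj_out : xj \notin <<Xi>>%VS)
  (xX : x \in X) (x_out : x \notin <<Xi>>%VS) (x_neq_xj : x != xj)
  (xE : x = a *: xi + b *: xj) (a_gt0 : 0 < a) (b_gt0 : 0 < b).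

Lemma no_mixed_expansion_in_block (B : seq 'rV[R]_n) (c : 'rV[R]_n -> R) :
  free B -> {subset B <= X} -> {subset B <= <<Xi>>%VS} ->
  xi = \sum_(v <- B) c v *: v ->
  (exists2 v, v \in B & 0 < c v) -> (exists2 v, v \in B & c v < 0) -> False.
Proof.
move=> fB BX BXi.
apply: (no_mixed_expansion X_good X_span xX xjX BX a_gt0 b_gt0 xE).
  have sB : (<<B>> <= <<Xi>>)%VS by apply/span_subvP.
  by rewrite free_cons fB andbT; apply: contra xj_out; apply: (subvP sB).
by rewrite inE negb_or x_neq_xj /=; apply: contra x_out; apply: BXi.
Qed.

(* Otherwise xi is a combination of y and Xi \ {xi, r} in which y and e have
   coefficients of opposite signs. *)
Lemma coef_le_of_neq_xi (lam : 'rV[R]_n -> R) (y r e : 'rV[R]_n) :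
  y \in X -> y = comb Xi lam -> r \in Xi -> e \in Xi -> e != xi ->
  lam r != lam xi -> lam e <= lam r.
Proof.
move=> yX yE rXi eXi exi lrxi; rewrite leNgt; apply/negP => lre.
have er : e != r by apply: contraTneq lre => ->; rewrite ltxx.
set Rs := Xi `\` [fset xi; r].
have fB := free_exchange1 Xi_sum0 Xi_aff xi_in rXi lrxi yE.
have RXi : Rs `<=` Xi := fsubsetDl _ _.
case/andP: (free_uniq fB) => yR _.
have eR : e \in Rs by rewrite in_fsetD !inE negb_or exi er eXi.
have ey : e != y by apply: contraNneq yR => <-.
set d := lam xi - lam r.
have d0 : d != 0 by rewrite subr_eq0 eq_sym.
pose c v := if v == y then d^-1 else - (lam v - lam r) / d.
have BX : {subset y :: (Rs : seq _) <= X}.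
  by move=> v; rewrite in_cons => /orP[/eqP->//|/(fsubsetP RXi)/(fsubsetP Xi_sub)].
have BXi : {subset y :: (Rs : seq _) <= <<Xi>>%VS}.
  move=> v; rewrite in_cons => /orP[/eqP->|/(fsubsetP RXi)/memv_span//].
  by rewrite yE comb_in_span.
have xiE : xi = \sum_(v <- y :: (Rs : seq _)) c v *: v.
  rewrite big_cons /c eqxx [LHS](comb_exchange1 Xi_sum0 xi_in rXi lrxi yE).
  congr (_ + _); apply: eq_big_seq => v vR.
  by rewrite ifN //; apply: contraNneq yR => <-.
have ce : c e = - (lam e - lam r) / d by rewrite /c (negPf ey).
have cy : c y = d^-1 by rewrite /c eqxx.
have eB : e \in y :: (Rs : seq _) by rewrite in_cons eR orbT.
move: d0; rewrite neq_lt => /orP[dn|dp];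
  apply: (no_mixed_expansion_in_block fB BX BXi xiE).
- by exists e; rewrite // ce mulNr oppr_gt0 pmulr_rlt0 ?invr_lt0 // subr_gt0.
- by exists y; rewrite ?mem_head // cy invr_lt0.
- by exists y; rewrite ?mem_head // cy invr_gt0.
- by exists e; rewrite // ce mulNr oppr_lt0 divr_gt0 // subr_gt0.
Qed.

(* Otherwise xi is a combination of p, q and Xi \ {xi, s, t} in which p has a
   negative and u a positive coefficient. *)
Lemma no_crossing_blocks (p q : 'rV[R]_n) (al be : R) (P Q : {fset 'rV[R]_n})
    (s t u : 'rV[R]_n) :
  p \in X -> q \in X -> 0 < al -> 0 < be -> P `<=` Xi -> Q `<=` Xi ->
  p = al *: \sum_(e <- P) e -> q = be *: \sum_(e <- Q) e ->
  xi \notin P -> xi \notin Q -> s \in P -> s \notin Q -> t \in Q -> t \notin P ->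
  u \in P -> u \in Q -> False.
Proof.
move=> pX qX al0 be0 PXi QXi pE qE xiP xiQ sP sQ tQ tP uP uQ.
have [al_neq0 be_neq0] : al != 0 /\ be != 0 by rewrite !gt_eqF.
have [sXi tXi] : s \in Xi /\ t \in Xi by rewrite (fsubsetP PXi) ?(fsubsetP QXi).
have pC : p = comb Xi (fun v => al * (v \in P)%:R).
  by rewrite pE (sum_comb_indicator PXi) combZ.
have qC : q = comb Xi (fun v => be * (v \in Q)%:R).
  by rewrite qE (sum_comb_indicator QXi) combZ.
set Rs := Xi `\` [fset xi; s; t].
have fB : free (p :: q :: (Rs : seq _)).
  apply: (free_exchange2 Xi_sum0 Xi_aff xi_in sXi tXi _ _ _ _ pC qC).
  - by rewrite (negPf tP) (negPf xiP).
  - by rewrite (negPf sQ) (negPf xiQ).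
  - by rewrite sP (negPf xiP) /= mulr0 mulr1.
  - by rewrite tQ (negPf xiQ) /= mulr0 mulr1.
case/andP: (free_uniq fB); rewrite in_cons negb_or => /andP[pq pR] /andP[qR _].
have uR : u \in Rs.
  have uxi : u != xi by apply: contraNneq xiP => <-.
  have us : u != s by apply: contraNneq sQ => <-.
  have ut : u != t by apply: contraNneq tP => <-.
  by rewrite in_fsetD !inE !negb_or uxi us ut (fsubsetP PXi _ uP).
pose c v := if v == p then - al^-1 else if v == q then - be^-1
  else (v \in P)%:R + (v \in Q)%:R - 1.
have BX : {subset p :: q :: (Rs : seq _) <= X}.
  move=> v; rewrite !in_cons => /orP[/eqP->//|/orP[/eqP->//|]].
  by move/(fsubsetP (fsubsetDl _ _))/(fsubsetP Xi_sub).
have BXi : {subset p :: q :: (Rs : seq _) <= <<Xi>>%VS}.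
  move=> v; rewrite !in_cons => /orP[/eqP->|/orP[/eqP->|]].
  - by rewrite pC comb_in_span.
  - by rewrite qC comb_in_span.
  - by move/(fsubsetP (fsubsetDl _ _))/memv_span.
have xiE : xi = \sum_(v <- p :: q :: (Rs : seq _)) c v *: v.
  rewrite !big_cons /c eqxx [q == p]eq_sym (negPf pq) eqxx.
  rewrite [LHS](comb_exchange2 Xi_sum0 PXi QXi xi_in xiP xiQ sP sQ tQ tP al_neq0 be_neq0
    pE qE).
  congr (_ + (_ + _)); apply: eq_big_seq => v vR.
  have vp : v != p by apply: contraNneq pR => <-.
  have vq : v != q by apply: contraNneq qR => <-.
  by rewrite (negPf vp) (negPf vq).
apply: (no_mixed_expansion_in_block fB BX BXi xiE).
- exists u; first by rewrite !in_cons uR !orbT.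
  have up : u != p by apply: contraNneq pR => <-.
  have uq : u != q by apply: contraNneq qR => <-.
  by rewrite /c (negPf up) (negPf uq) uP uQ /= addrK ltr01.
- by exists p; rewrite ?mem_head // /c eqxx oppr_lt0 invr_gt0.
Qed.

Lemma support_weights (y : 'rV[R]_n) (S : {fset 'rV[R]_n}) :
  y != 0 -> is_support Xi y S -> exists w : 'rV[R]_n -> R,
    [/\ {in S, forall v, 0 < w v}, y = \sum_(v <- S) w v *: v
      & exists2 z, z \in Xi & z \notin S].
Proof.
move=> y0 [SXi [w [w_ge0 wE]] Smin].
have w_neq0 (w' : 'rV[R]_n -> R) e : {in S, forall v, 0 <= w' v} ->
    y = \sum_(v <- S) w' v *: v -> e \in S -> w' e != 0.
  move=> w'_ge0 w'E eS; apply/eqP => w'e0; apply: (Smin _ (fproperD1 eS)).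
  exists w'; split; first by move=> v; rewrite in_fsetD1 => /andP[_ /w'_ge0].
  by rewrite w'E (big_fsetD1 e) //= w'e0 scale0r add0r.
exists w; split => //.
  by move=> v vS; rewrite lt0r w_ge0 // andbT (w_neq0 w).
case: (pselect (exists2 z, z \in Xi & z \notin S)) => // noz; exfalso.
have SE : S = Xi.
  apply/eqP; rewrite eqEfsubset SXi; apply/fsubsetP => v vXi.
  by case: (boolP (v \in S)) => // vS; case: noz; exists v.
have [S0|[s0 s0S]] := fset_0Vmem S.
  by move: y0; rewrite wE S0 big_seq_fset0 eqxx.
(* On the whole simplex, lowering all weights by their minimum keeps y. *)
have [m mS mmin] := seq_argmin w s0S.
suff: w m - w m != 0 by rewrite subrr eqxx.
apply: (w_neq0 (fun v => w v - w m)) mS => [v vS|]; first by rewrite subr_ge0 mmin.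
under eq_bigr do rewrite scalerBl.
by rewrite sumrB -scaler_sumr [in X in w m *: X]SE Xi_sum0 scaler0 subr0.
Qed.

Lemma support_of_xi (y : 'rV[R]_n) (S : {fset 'rV[R]_n}) :
  y \in X -> is_support Xi y S -> xi \in S -> S `<=` [fset xi].
Proof.
move=> yX hS xiS; have SXi : S `<=` Xi by case: hS.
have y0 : y != 0 by apply: contraNneq X0 => <-.
have [w [w_gt0 wE [z zXi zS]]] := support_weights y0 hS.
pose lam v := if v \in S then w v else 0.
have yE : y = comb Xi lam by rewrite wE (comb_restrict _ SXi).
have lz : lam z != lam xi by rewrite /lam (negPf zS) xiS eq_sym gt_eqF ?w_gt0.
apply/fsubsetP => e eS; rewrite inE; apply/negPn/negP => exi.
have := coef_le_of_neq_xi yX yE zXi (fsubsetP SXi e eS) exi lz.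
by rewrite /lam eS (negPf zS) leNgt w_gt0.
Qed.

Lemma support_uniform (y : 'rV[R]_n) (S : {fset 'rV[R]_n}) :
  y \in X -> is_support Xi y S -> exists c : R, 0 < c /\ y = c *: \sum_(e <- S) e.
Proof.
move=> yX hS; have SXi : S `<=` Xi by case: hS.
have y0 : y != 0 by apply: contraNneq X0 => <-.
have [w [w_gt0 wE _]] := support_weights y0 hS.
have w_const : {in S &, forall s1 s2, w s1 = w s2}.
  have [/(support_of_xi yX hS)/fsubsetP S1|xiS] := boolP (xi \in S).
    by move=> s1 s2 /S1/fset1P-> /S1/fset1P->.
  pose lam v := if v \in S then w v else 0.
  have yE : y = comb Xi lam by rewrite wE (comb_restrict _ SXi).
  have w_le s1 s2 : s1 \in S -> s2 \in S -> w s2 <= w s1.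
    move=> s1S s2S.
    have s2xi : s2 != xi by apply: contraNneq xiS => <-.
    have l1 : lam s1 != lam xi by rewrite /lam s1S (negPf xiS) gt_eqF ?w_gt0.
    have := coef_le_of_neq_xi yX yE (fsubsetP SXi _ s1S) (fsubsetP SXi _ s2S) s2xi l1.
    by rewrite /lam s1S s2S.
  by move=> s1 s2 s1S s2S; apply/eqP; rewrite eq_le !w_le.
have [S0|[s0 s0S]] := fset_0Vmem S.
  by exists 1; rewrite ltr01 wE S0 !big_seq_fset0 scale1r.
exists (w s0); split; first exact: w_gt0.
by rewrite wE scaler_sumr; apply: eq_big_seq => v vS; rewrite (w_const v s0).
Qed.

Lemma supports_laminar (p q : 'rV[R]_n) (Sp Sq : {fset 'rV[R]_n}) :
  p \in X -> q \in X -> is_support Xi p Sp -> is_support Xi q Sq ->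
  [\/ [disjoint Sp & Sq]%fset, Sp `<=` Sq | Sq `<=` Sp].
Proof.
move=> pX qX hp hq.
have [xiP|xiP] := boolP (xi \in Sp).
  have /fsubsetP P1 := support_of_xi pX hp xiP.
  have [xiQ|xiQ] := boolP (xi \in Sq).
    by constructor 2; apply/fsubsetP => v /P1/fset1P->.
  by constructor 1; apply/fdisjointP => v /P1/fset1P->.
have [xiQ|xiQ] := boolP (xi \in Sq).
  have /fsubsetP Q1 := support_of_xi qX hq xiQ.
  by constructor 1; apply/fdisjointP => v vP; apply: contra xiP => /Q1/fset1P <-.
have [|nd] := boolP [disjoint Sp & Sq]%fset; first by constructor 1.
have [|/fsubsetPn[s sP sQ]] := boolP (Sp `<=` Sq); first by constructor 2.
have [|/fsubsetPn[t tQ tP]] := boolP (Sq `<=` Sp); first by constructor 3.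
move: nd; rewrite -fsetI_eq0 => /fset0Pn[u /fsetIP[uP uQ]].
have [al [al_gt0 pE]] := support_uniform pX hp.
have [be [be_gt0 qE]] := support_uniform qX hq.
have [SpXi SqXi] : Sp `<=` Xi /\ Sq `<=` Xi by case: hp; case: hq.
by case: (no_crossing_blocks pX qX al_gt0 be_gt0 SpXi SqXi pE qE xiP xiQ sP sQ tQ
  tP uP uQ).
Qed.

End Block.

Lemma pos_fset2 (R : realType) (n : nat) (u v x : 'rV[R]_n) :
  u != v -> pos [fset u; v] x ->
  exists a b : R, [/\ 0 <= a, 0 <= b & x = a *: u + b *: v].
Proof.
move=> uv [w [w_ge0 ->]]; exists (w u), (w v).
by rewrite big_fsetU1 ?inE // big_seq_fset1; split=> //; apply: w_ge0;
  rewrite !inE eqxx ?orbT.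
Qed.

Section Skeleton.
Variables (R : realType) (n k : nat) (X : {fset 'rV[R]_n}).
Variable Xs : 'I_k -> {fset 'rV[R]_n}.
Hypothesis X_skeleton : skeleton X Xs.

Lemma skeleton_span : (<<X>> = fullv)%VS.
Proof.
case: X_skeleton => Xs_sub _ _ Xs_full _.
apply/eqP; rewrite eqEsubv subvf /= -Xs_full; apply/subv_sumP => l _.
by apply/span_subvP => v vXl; apply: memv_span; apply: (fsubsetP (Xs_sub l)).
Qed.

Lemma skeleton_span_disjoint l m v :
  l != m -> v \in <<Xs l>>%VS -> v \in <<Xs m>>%VS -> v = 0.
Proof.
case: X_skeleton => _ _ _ _ /directv_sumP Xs_direct lm vl vm.
apply/eqP; rewrite -memv0 -(Xs_direct m isT) memv_cap vm /=.
by apply: (subvP (sumv_sup l _ (subvv _))) vl; rewrite lm.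
Qed.

End Skeleton.

Local Open Scope fset_scope.

Theorem proposition5p5 (R : realType) (n : nat) (X : {fset 'rV[R]_n})
  (k : nat) (Xs : 'I_k -> {fset 'rV[R]_n})
  (hX : standing_setting X)
  (hsk : skeleton X Xs)
  (hscale : forall l, \sum_(e <- Xs l) e = 0)
  (x xi xj : 'rV[R]_n) (i j : 'I_k)
  (hx : x \in X)
  (hxspan : forall l, x \notin <<Xs l>>%VS)
  (hij : i != j) (hxi : xi \in Xs i) (hxj : xj \in Xs j)
  (hxpos : pos [fset xi; xj] x) :
  (forall y, y \in X -> y \in <<Xs i>>%VS ->
     forall S, is_support (Xs i) y S ->
       exists c : R, 0 < c /\ y = c *: \sum_(e <- S) e) /\
  (forall p q, p \in X -> p \in <<Xs i>>%VS -> q \in X -> q \in <<Xs i>>%VS ->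
     forall Sp Sq, is_support (Xs i) p Sp -> is_support (Xs i) q Sq ->
       [\/ [disjoint Sp & Sq], Sp `<=` Sq | Sq `<=` Sp]).
Proof.
case: hX => X0 _ _ X_good.
have X_span := skeleton_span hsk.
case: (hsk) => Xs_sub _ Xs_simplex _ _.
have Xi_aff : affinely_independent (Xs i) by case: (Xs_simplex i).
have xjX : xj \in X := fsubsetP (Xs_sub j) xj hxj.
have xj_out : xj \notin <<Xs i>>%VS.
  apply: contraNN X0 => xji.
  by rewrite -(skeleton_span_disjoint hsk hij xji (memv_span hxj)).
have xixj : xi != xj by apply: contraNneq xj_out => <-; apply: memv_span.
have [a [b [a_ge0 b_ge0 xE]]] := pos_fset2 xixj hxpos.
have a_gt0 : 0 < a.
  rewrite lt0r a_ge0 andbT; apply: contraNneq (hxspan j) => a0.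
  by rewrite xE a0 scale0r add0r memvZ // memv_span.
have b_gt0 : 0 < b.
  rewrite lt0r b_ge0 andbT; apply: contraNneq (hxspan i) => b0.
  by rewrite xE b0 scale0r addr0 memvZ // memv_span.
have x_neq_xj : x != xj by apply: contraNneq (hxspan j) => ->; apply: memv_span.
split=> [y yX _ S | p q pX _ qX _ Sp Sq].
  exact: (support_uniform X_good X_span X0 (hscale i) Xi_aff (Xs_sub i) hxi xjX
    xj_out hx (hxspan i) x_neq_xj xE a_gt0 b_gt0 yX).
exact: (supports_laminar X_good X_span X0 (hscale i) Xi_aff (Xs_sub i) hxi xjX
  xj_out hx (hxspan i) x_neq_xj xE a_gt0 b_gt0 pX qX).
Qed.
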